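(* Let $\mathcal{H}=\mathbb{C}^{d_1}\otimes\cdots\otimes\mathbb{C}^{d_N}$ with all $d_i\ge2$ and $G=SL(d_1,\mathbb{C})\times\cdots\times SL(d_N,\mathbb{C})$ acting on $\mathcal{H}$ by $g_1\otimes\cdots\otimes g_N$ and on $\mathbb{P}(\mathcal{H})$ by $g[\psi]=[g|\psi\rangle]$. For every semistable $|\Psi\rangle\in\mathcal{H}$, $\dim G|\Psi\rangle=\dim G[\Psi]$.
   Context: Orbits are complex submanifolds with $\dim G|\Psi\rangle=\dim G-\dim G_{|\Psi\rangle}$ and $\dim G[\Psi]=\dim G-\dim G_{[\Psi]}$, where $G_{|\Psi\rangle}=\{g: g|\Psi\rangle=|\Psi\rangle\}$ and $G_{[\Psi]}=\{g: g|\Psi\rangle\propto|\Psi\rangle\}$. A vector $|\Psi\rangle$ is semistable if $0\notin\overline{G|\Psi\rangle}$ (closure in the standard topology). *)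

From HB Require Import structures.
From mathcomp Require Import all_boot all_order all_algebra.
From mathcomp Require Import boolp reals.
From mathcomp Require Import complex.

Set Implicit Arguments.
Unset Strict Implicit.
Unset Printing Implicit Defensive.

Import Order.TTheory GRing.Theory Num.Theory.
Local Open Scope ring_scope.
Local Open Scope complex_scope.

(* Multi-indices (j_1,...,j_N) with j_i < d_i : basis of C^{d_1} (x) ... (x) C^{d_N}. *)
Definition midx (N : nat) (d : 'I_N -> nat) : finType :=
  {dffun forall i : 'I_N, 'I_(d i)}.

(* A vector |Psi> of H = C^{d_1} (x) ... (x) C^{d_N}, given by its coordinates
   in the product basis. *)
Definition tensor (R : realType) (N : nat) (d : 'I_N -> nat) : Type :=
  midx d -> R[i].

Definition mxtuple (R : realType) (N : nat) (d : 'I_N -> nat) : Type :=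
  forall i : 'I_N, 'M[R[i]]_(d i).

Definition mxtuple1 (R : realType) (N : nat) (d : 'I_N -> nat) : mxtuple R d :=
  fun i => 1%:M.

Definition inG (R : realType) (N : nat) (d : 'I_N -> nat) (g : mxtuple R d) : Prop :=
  forall i, \det (g i) = 1.

(* The action (g_1 (x) ... (x) g_N) |Psi>, in coordinates. *)
Definition act (R : realType) (N : nat) (d : 'I_N -> nat)
    (g : mxtuple R d) (psi : tensor R d) : tensor R d :=
  fun j => \sum_(k : midx d) (\prod_(i < N) g i (j i) (k i)) * psi k.

Definition stab_vec (R : realType) (N : nat) (d : 'I_N -> nat)
    (psi : tensor R d) (g : mxtuple R d) : Prop :=
  inG g /\ act g psi = psi.

Definition stab_ray (R : realType) (N : nat) (d : 'I_N -> nat)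
    (psi : tensor R d) (g : mxtuple R d) : Prop :=
  inG g /\ exists c : R[i], forall j, act g psi j = c * psi j.

(* Tangent vectors at the identity of a subset S of the group:
   X = gamma'(0) for a curve gamma : C -> S with gamma(0) = 1, complex
   differentiable at 0 (derivative written out entrywise, epsilon-delta). *)
Definition tangent_at_1 (R : realType) (N : nat) (d : 'I_N -> nat)
    (S : mxtuple R d -> Prop) (X : mxtuple R d) : Prop :=
  exists gamma : R[i] -> mxtuple R d,
    (forall z, S (gamma z)) /\ gamma 0 = mxtuple1 R d /\
    forall eps : R, 0 < eps -> exists delta : R, 0 < delta /\
      forall z : R[i], z != 0 -> `|z| < delta%:C ->
        forall (i : 'I_N) (a b : 'I_(d i)),
          `|(gamma z i a b - mxtuple1 R d i a b) / z - X i a b| < eps%:C.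

Definition lin_indep (R : realType) (N : nat) (d : 'I_N -> nat) (k : nat)
    (Xs : 'I_k -> mxtuple R d) : Prop :=
  forall c : 'I_k -> R[i],
    (forall (i : 'I_N) (a b : 'I_(d i)), \sum_(l < k) c l * Xs l i a b = 0) ->
    forall l, c l = 0.

Definition has_indep (R : realType) (N : nat) (d : 'I_N -> nat)
    (T : mxtuple R d -> Prop) (k : nat) : Prop :=
  exists Xs : 'I_k -> mxtuple R d, (forall l, T (Xs l)) /\ lin_indep Xs.

(* Complex dimension of (the span of) a set T of matrix tuples: the largest
   number of C-linearly independent elements of T (bounded by the ambient
   dimension sum_i d_i^2). *)
Definition dimC (R : realType) (N : nat) (d : 'I_N -> nat)
    (T : mxtuple R d -> Prop) : nat :=
  (\max_(k < (\sum_(i < N) d i ^ 2).+1 | `[< has_indep T k >]) k)%N.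

(* Dimension of a (closed) subgroup H of G: dimension of its tangent space
   (Lie algebra) at the identity. *)
Definition subgroup_dim (R : realType) (N : nat) (d : 'I_N -> nat)
    (H : mxtuple R d -> Prop) : nat :=
  dimC (tangent_at_1 H).

Definition dimG (N : nat) (d : 'I_N -> nat) : nat := (\sum_(i < N) (d i ^ 2 - 1))%N.

Definition orbit_dim_vec (R : realType) (N : nat) (d : 'I_N -> nat)
    (psi : tensor R d) : nat :=
  (dimG d - subgroup_dim (stab_vec psi))%N.

Definition orbit_dim_ray (R : realType) (N : nat) (d : 'I_N -> nat)
    (psi : tensor R d) : nat :=
  (dimG d - subgroup_dim (stab_ray psi))%N.

(* Semistability: 0 is not in the closure (standard topology of H = C^D) of
   the orbit G|Psi>, i.e. some ball around 0 (sup-norm) misses the orbit. *)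
Definition semistable (R : realType) (N : nat) (d : 'I_N -> nat)
    (psi : tensor R d) : Prop :=
  exists eps : R, 0 < eps /\
    forall g : mxtuple R d, inG g -> exists j, eps%:C <= `|act g psi j|.

(* If g in G scales a semistable psi by c, then |c| = 1: otherwise the powers
   of g, or of g^-1, push psi into every neighbourhood of 0 inside its orbit.
   Along a curve gamma(z) in G_[Psi] through 1 the scalar c(z) is therefore
   unimodular with c(0) = 1, so its complex derivative at 0 vanishes.
   Differentiating gamma(z) psi = c(z) psi and det gamma_i(z) = 1 at 0 shows
   that every tangent vector X of G_[Psi] is traceless and kills psi under the
   infinitesimal action sum_i 1 (x) .. (x) X_i (x) .. (x) 1.  Conversely every
   such X is tangent to G_|Psi>: the matrices exp(z X_i), obtained as limits of
   (1 + 2^-k z X_i)^(2^k), have determinant exp(z tr X_i) = 1, fix psi because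
   their tensor product is the exponential of the infinitesimal action, and lie
   within O(|z|^2) of 1 + z X_i.  So both stabilizers have the same tangent
   space, hence the same dimension. *)

From HB Require Import structures.
From mathcomp Require Import all_boot all_order all_algebra.
From mathcomp Require Import boolp classical_sets reals complex.
From mathcomp Require Import ring lra.
From mathcomp Require Import fingroup perm.
Set Implicit Arguments.
Unset Strict Implicit.
Unset Printing Implicit Defensive.
Import Order.TTheory GRing.Theory Num.Theory Normc.
Local Open Scope ring_scope.
Local Open Scope complex_scope.

Section TensorAction.
Variables (R : realType) (N : nat) (d : 'I_N -> nat).
Implicit Types (g h : mxtuple R d) (v : tensor R d).

Lemma prod_sum_midx (T : comPzSemiRingType) (F : forall i : 'I_N, 'I_(d i) -> T) :
  \prod_(i < N) \sum_(b < d i) F i b = \sum_(k : midx d) \prod_(i < N) F i (k i).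
Proof.
pose P_ i := [ffun b => F i b].
transitivity (\prod_(i < N) \sum_(j in tagged_with (fun i => 'I_(d i)) i)
                untag 0 (P_ i) j).
  apply: eq_bigr => i _; rewrite -(big_tag (fun i b => P_ i b)).
  by apply: eq_bigr => j _; rewrite ffunE.
rewrite bigA_distr_big_dep -big_fprod.
rewrite /midx (reindex (@dffun_of_fprod _ (fun i => 'I_(d i)))); last first.
  exact/onW_bij/dffun_of_fprod_bij.
by apply: eq_bigr => t _; apply: eq_bigr => i _; rewrite !ffunE.
Qed.

Definition mxtuple_mul g h : mxtuple R d := fun i => g i *m h i.

Definition mxtuple_inv g : mxtuple R d := fun i => invmx (g i).

Lemma act_mul g h v : act g (act h v) = act (mxtuple_mul g h) v.
Proof.
apply: funext => j; rewrite /act.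
under eq_bigr do rewrite big_distrr /=.
rewrite exchange_big /=; apply: eq_bigr => l _.
under eq_bigr do rewrite mulrA.
rewrite -big_distrl /=; congr (_ * _).
under [RHS]eq_bigr do rewrite mxE.
by rewrite prod_sum_midx; apply: eq_bigr => k _; rewrite -big_split.
Qed.

Lemma act1 v : act (mxtuple1 R d) v = v.
Proof.
apply: funext => j; rewrite /act (bigD1 j) //= [X in _ + X]big1 ?addr0.
  by rewrite big1 ?mul1r // => i _; rewrite mxE eqxx.
move=> k /negbTE kj.
have [i ij] : exists i, j i != k i.
  apply/existsP; apply: contraFT kj => /existsPn jk.
  by apply/eqP/ffunP => i; move: (jk i); rewrite negbK => /eqP.
by rewrite (bigD1 i) //= mxE (negbTE ij) !mul0r.
Qed.

Lemma actZ g c v : act g (fun j => c * v j) = fun j => c * act g v j.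
Proof.
by apply: funext => j; rewrite /act big_distrr; apply: eq_bigr => k _; rewrite mulrCA.
Qed.

Lemma actB g u v : act g (fun j => u j - v j) = fun j => act g u j - act g v j.
Proof.
by apply: funext => j; rewrite /act -sumrB; apply: eq_bigr => k _; rewrite mulrBr.
Qed.

Lemma act_exp g m v : act (fun i => g i ^+ m) v = iter m (act g) v.
Proof.
elim: m => [|m IH]; first exact: (act1 v).
rewrite iterS -IH act_mul; congr act.
by apply: functional_extensionality_dep => i; rewrite exprS.
Qed.

Lemma inG1 : inG (mxtuple1 R d).
Proof. by move=> i; rewrite det1. Qed.

Lemma inG_mul g h : inG g -> inG h -> inG (mxtuple_mul g h).
Proof. by move=> Gg Gh i; rewrite det_mulmx Gg Gh mulr1. Qed.

Lemma inG_inv g : inG g -> inG (mxtuple_inv g).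
Proof. by move=> Gg i; rewrite det_inv Gg invr1. Qed.

Lemma inG_exp g m : inG g -> inG (fun i => g i ^+ m).
Proof.
move=> Gg; elim: m => [|m IH]; first exact: inG1.
move=> i; rewrite exprS; exact: (inG_mul Gg IH i).
Qed.

Lemma mxtuple_mulVg g : inG g -> mxtuple_mul (mxtuple_inv g) g = mxtuple1 R d.
Proof.
move=> Gg; apply: functional_extensionality_dep => i.
by rewrite /mxtuple_mul mulVmx // unitmxE Gg unitr1.
Qed.

End TensorAction.

Section ComplexModulus.
Variable R : realType.
Implicit Types x y : R[i].

Lemma normcE x : `|x| = (normc x)%:C.
Proof. by rewrite normc_def; case: x. Qed.

Lemma normc_ge0 x : 0 <= normc x.
Proof. by case: x => a b; apply: sqrtr_ge0. Qed.

Lemma normc_eq0 x : (normc x == 0) = (x == 0).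
Proof. by apply/eqP/eqP => [/eq0_normc //|->]; rewrite normc0. Qed.

Lemma normc_gt0 x : (0 < normc x) = (x != 0).
Proof. by rewrite lt_def normc_eq0 normc_ge0 andbT. Qed.

Lemma normcB x y : normc (x - y) = normc (y - x).
Proof. by rewrite -normcN opprB. Qed.

Lemma normcR (r : R) : normc r%:C = `|r|.
Proof. by rewrite /normc /= expr0n addr0 sqrtr_sqr. Qed.

Lemma normcX x n : normc (x ^+ n) = normc x ^+ n.
Proof. by elim: n => [|n IH]; rewrite ?normc1 // !exprS normcM IH. Qed.

Lemma normc_prod (I : Type) (r : seq I) (F : I -> R[i]) :
  normc (\prod_(k <- r) F k) = \prod_(k <- r) normc (F k).
Proof. exact: (big_morph _ (@normcM R) (normc1 R)). Qed.

Lemma normc_sum (I : Type) (r : seq I) (F : I -> R[i]) :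
  normc (\sum_(k <- r) F k) <= \sum_(k <- r) normc (F k).
Proof.
elim: r => [|k r IH]; first by rewrite !big_nil normc0.
by rewrite !big_cons; apply: le_trans (le_normcD _ _) _; rewrite lerD2l.
Qed.

Lemma normc_ltC x (e : R) : (`|x| < e%:C) = (normc x < e).
Proof. by rewrite normcE ltcR. Qed.

Lemma normc_leC x (e : R) : (e%:C <= `|x|) = (e <= normc x).
Proof. by rewrite normcE lecR. Qed.

Lemma normc_Re x : `|complex.Re x| <= normc x.
Proof.
by case: x => a b; rewrite -sqrtr_sqr ler_sqrt ?lerDl ?sqr_ge0 ?addr_ge0 ?sqr_ge0.
Qed.

Lemma normc_Im x : `|complex.Im x| <= normc x.
Proof.
by case: x => a b; rewrite -sqrtr_sqr ler_sqrt ?lerDr ?sqr_ge0 ?addr_ge0 ?sqr_ge0.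
Qed.

Lemma normc_le_ReIm x : normc x <= `|complex.Re x| + `|complex.Im x|.
Proof.
case: x => a b /=; have ha := normr_ge0 a; have hb := normr_ge0 b.
rewrite -[X in _ <= X]ger0_norm ?addr_ge0 // -sqrtr_sqr ler_sqrt ?sqr_ge0 //.
rewrite -(real_normK (num_real a)) -(real_normK (num_real b)); nra.
Qed.

End ComplexModulus.

(** * Limits and complex derivatives at 0 *)

Section Limits.
Variables (R : realType) (T : Type).

Definition is_filter (F : (T -> Prop) -> Prop) :=
  [/\ F (fun _ => True),
      forall P Q, F P -> F Q -> F (fun t => P t /\ Q t) &
      forall P Q : T -> Prop, (forall t, P t -> Q t) -> F P -> F Q].

Definition tends_to (F : (T -> Prop) -> Prop) (u : T -> R[i]) (l : R[i]) :=
  forall e : R, 0 < e -> F (fun t => normc (u t - l) < e).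

Variables (F : (T -> Prop) -> Prop) (hF : is_filter F).

Lemma filter_forall (I : finType) (P : I -> T -> Prop) :
  (forall i, F (P i)) -> F (fun t => forall i, P i t).
Proof.
move=> FP; case: hF => FT FI FS.
suff Fs (s : seq I) : F (fun t => forall i, i \in s -> P i t).
  by apply: FS (Fs (enum I)) => t Pt i; apply: Pt; rewrite mem_enum.
elim: s => [|i s IH]; first by apply: FS FT => t _ i.
apply: FS (FI _ _ (FP i) IH) => t [Pit Pst] j; rewrite inE => /orP[/eqP->//|].
exact: Pst.
Qed.

Lemma tends_to_cst c : tends_to F (fun _ => c) c.
Proof. by case: hF => FT _ FS e e0; apply: FS FT => _ _; rewrite subrr normc0. Qed.

Lemma tends_toD u v l m : tends_to F u l -> tends_to F v m ->
  tends_to F (fun t => u t + v t) (l + m).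
Proof.
move=> ul vm e e0; case: hF => _ FI FS.
have e2 : 0 < e / 2 by rewrite divr_gt0.
apply: FS (FI _ _ (ul _ e2) (vm _ e2)) => t [ult vmt].
rewrite opprD addrACA; apply: le_lt_trans (le_normcD _ _) _; lra.
Qed.

Lemma tends_toM u v l m : tends_to F u l -> tends_to F v m ->
  tends_to F (fun t => u t * v t) (l * m).
Proof.
move=> ul vm e e0; case: hF => _ FI FS.
set K := 1 + normc l + normc m.
have K0 : 0 < K by rewrite /K; have := normc_ge0 l; have := normc_ge0 m; lra.
set eta := e / (K + e).
have etaE : eta * (K + e) = e by rewrite /eta divfK // gt_eqF // addr_gt0.
have eta0 : 0 < eta by rewrite divr_gt0 // addr_gt0.
apply: FS (FI _ _ (ul _ eta0) (vm _ eta0)) => t [ult vmt].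
have -> : u t * v t - l * m = (u t - l) * (v t - m) + (u t - l) * m + l * (v t - m).
  by ring.
apply: le_lt_trans (le_normcD _ _) _.
apply: (@le_lt_trans _ _ (normc ((u t - l) * (v t - m)) + normc ((u t - l) * m)
    + normc (l * (v t - m)))); first by rewrite lerD2r le_normcD.
rewrite !normcM.
have := normc_ge0 (u t - l); have := normc_ge0 (v t - m).
have := normc_ge0 l; have := normc_ge0 m.
move: ult vmt etaE; rewrite /K; nra.
Qed.

Lemma tends_to_sum (I : Type) (r : seq I) (u : I -> T -> R[i]) (l : I -> R[i]) :
  (forall k, tends_to F (u k) (l k)) ->
  tends_to F (fun t => \sum_(k <- r) u k t) (\sum_(k <- r) l k).
Proof.
move=> ul; elim: r => [|k r IH].
  by rewrite big_nil; under eq_fun do rewrite big_nil; exact: tends_to_cst.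
by rewrite big_cons; under eq_fun do rewrite big_cons; exact: tends_toD.
Qed.

Lemma tends_to_prod (I : Type) (r : seq I) (u : I -> T -> R[i]) (l : I -> R[i]) :
  (forall k, tends_to F (u k) (l k)) ->
  tends_to F (fun t => \prod_(k <- r) u k t) (\prod_(k <- r) l k).
Proof.
move=> ul; elim: r => [|k r IH].
  by rewrite big_nil; under eq_fun do rewrite big_nil; exact: tends_to_cst.
by rewrite big_cons; under eq_fun do rewrite big_cons; exact: tends_toM.
Qed.

Lemma tends_to_unique u l m : (forall P, F P -> exists t, P t) ->
  tends_to F u l -> tends_to F u m -> l = m.
Proof.
move=> Fproper ul um; apply/eqP; rewrite -subr_eq0 -normc_eq0.
rewrite eq_le normc_ge0 andbT; apply/ler_addgt0Pr => e e0; rewrite add0r.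
case: hF => _ FI _; have e2 : 0 < e / 2 by rewrite divr_gt0.
have [t [ult umt]] := Fproper _ (FI _ _ (ul _ e2) (um _ e2)).
have -> : l - m = - (u t - l) + (u t - m) by ring.
apply: le_trans (le_normcD _ _) _; rewrite normcN; lra.
Qed.

End Limits.

Definition punctured0 (R : realType) (P : R[i] -> Prop) :=
  exists2 del : R, 0 < del & forall z, z != 0 -> normc z < del -> P z.

Definition eventually (P : nat -> Prop) := exists K, forall k, (K <= k)%N -> P k.

Lemma punctured0_filter (R : realType) : is_filter (@punctured0 R).
Proof.
split; last by move=> P Q PQ [del del0 Pdel]; exists del => // z z0 zdel; apply/PQ/Pdel.
- by exists 1.
move=> P Q [d1 d10 P1] [d2 d20 Q2]; exists (Num.min d1 d2); first by rewrite lt_min d10.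
by move=> z z0; rewrite lt_min => /andP[zd1 zd2]; split; [apply: P1 | apply: Q2].
Qed.

Lemma punctured0_proper (R : realType) (P : R[i] -> Prop) :
  punctured0 P -> exists z, P z.
Proof.
move=> [del del0 Pdel]; have del2 : 0 < del / 2 by rewrite divr_gt0.
exists (del / 2)%:C; apply: Pdel; last by rewrite normcR gtr0_norm //; lra.
by rewrite -[0]/(0%:C) (inj_eq (@complexI R)) gt_eqF.
Qed.

Lemma eventually_filter : is_filter eventually.
Proof.
split; last by move=> P Q PQ [K PK]; exists K => k kK; apply/PQ/PK.
- by exists 0%N.
move=> P Q [K1 P1] [K2 Q2]; exists (maxn K1 K2) => k.
by rewrite geq_max => /andP[k1 k2]; split; [apply: P1 | apply: Q2].
Qed.

Lemma eventually_proper (P : nat -> Prop) : eventually P -> exists k, P k.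
Proof. by move=> [K PK]; exists K; apply: PK. Qed.

Section Derivative0.
Variable R : realType.
Implicit Types f g : R[i] -> R[i].

Definition is_deriv0 f a := tends_to (@punctured0 R) (fun z => (f z - f 0) / z) a.

Lemma is_deriv0_unique f a b : is_deriv0 f a -> is_deriv0 f b -> a = b.
Proof. exact/tends_to_unique/punctured0_proper/punctured0_filter. Qed.

Lemma is_deriv0_affine (a b : R[i]) : is_deriv0 (fun z => a + z * b) b.
Proof.
move=> e e0; exists 1 => // z z0 _.
by rewrite mul0r addr0 [a + _]addrC addrK mulrC mulKf // subrr normc0.
Qed.

Lemma is_deriv0_cst (c : R[i]) : is_deriv0 (fun _ => c) 0.
Proof.
rewrite /is_deriv0; under eq_fun do rewrite subrr mul0r.
exact: tends_to_cst (punctured0_filter R) 0.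
Qed.

Lemma is_deriv0_cont f a : is_deriv0 f a -> tends_to (@punctured0 R) f (f 0).
Proof.
move=> fa; have F0 := punctured0_filter R.
have fE : f = fun z => f 0 + z * ((f z - f 0) / z).
  apply: funext => z; have [->|z0] := eqVneq z 0; first by rewrite mul0r addr0.
  by rewrite mulrC divfK // addrC subrK.
rewrite [X in tends_to _ X]fE.
have id0 : tends_to (@punctured0 R) id 0 by move=> e e0; exists e => // z _; rewrite subr0.
by have := tends_toD F0 (tends_to_cst F0 (f 0)) (tends_toM F0 id0 fa); rewrite mul0r addr0.
Qed.

Lemma is_deriv0D f g a b : is_deriv0 f a -> is_deriv0 g b ->
  is_deriv0 (fun z => f z + g z) (a + b).
Proof.
move=> fa gb; have := tends_toD (punctured0_filter R) fa gb.
by congr tends_to; apply: funext => z; ring.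
Qed.

Lemma is_deriv0M f g a b : is_deriv0 f a -> is_deriv0 g b ->
  is_deriv0 (fun z => f z * g z) (a * g 0 + f 0 * b).
Proof.
move=> fa gb; have F0 := punctured0_filter R.
have := tends_toD F0 (tends_toM F0 fa (is_deriv0_cont gb))
  (tends_toM F0 (tends_to_cst F0 (f 0)) gb).
by congr tends_to; apply: funext => z; ring.
Qed.

Lemma is_deriv0_sum (I : Type) (r : seq I) (f : I -> R[i] -> R[i]) (a : I -> R[i]) :
  (forall k, is_deriv0 (f k) (a k)) ->
  is_deriv0 (fun z => \sum_(k <- r) f k z) (\sum_(k <- r) a k).
Proof.
move=> fa; elim: r => [|k r IH].
  by rewrite big_nil; under eq_fun do rewrite big_nil; exact: is_deriv0_cst.
by rewrite big_cons; under eq_fun do rewrite big_cons; exact: is_deriv0D.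
Qed.

Lemma is_deriv0_prod (I : eqType) (r : seq I) (f : I -> R[i] -> R[i]) (a : I -> R[i]) :
  uniq r -> (forall k, is_deriv0 (f k) (a k)) ->
  is_deriv0 (fun z => \prod_(k <- r) f k z)
            (\sum_(k <- r) a k * \prod_(k' <- r | k' != k) f k' 0).
Proof.
move=> + fa; elim: r => [|k r IH].
  by move=> _; rewrite big_nil; under eq_fun do rewrite big_nil; exact: is_deriv0_cst.
move=> /= /andP[kr ur]; under eq_fun do rewrite big_cons.
have := is_deriv0M (fa k) (IH ur); congr is_deriv0.
rewrite big_cons big_cons eqxx /=; congr (_ + _).
  congr (_ * _); rewrite big_seq_cond [RHS]big_seq_cond; apply: eq_bigl => k'.
  have [k'r|] //= := boolP (k' \in r).
  by case: eqVneq => // ?; subst; rewrite k'r in kr.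
rewrite big_distrr /= big_seq [RHS]big_seq; apply: eq_bigr => k' k'r.
rewrite big_cons; case: eqVneq => [?|_]; first by subst; rewrite k'r in kr.
by rewrite /= mulrCA.
Qed.

End Derivative0.

(** * Dyadic estimates *)

Section RealEstimates.
Variable R : realType.

Lemma bernoulli (h : R) n : -1 <= h -> 1 + n%:R * h <= (1 + h) ^+ n.
Proof.
move=> h1; elim: n => [|n IH]; first by rewrite expr0 mul0r addr0.
have h0 : 0 <= 1 + h by lra.
rewrite exprS -natr1; have := ler_wpM2l h0 IH.
have : 0 <= n%:R * h ^+ 2 by rewrite mulr_ge0 ?sqr_ge0.
nra.
Qed.

Lemma exists_exprn_lt (r e : R) : 0 <= r -> r < 1 -> 0 < e -> exists n, r ^+ n < e.
Proof.
move=> r0 r1 e0; have [->|rn0] := eqVneq r 0; first by exists 1%N; rewrite expr1.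
have rp : 0 < r by rewrite lt_def rn0.
set h := r^-1 - 1; have hp : 0 < h by rewrite /h subr_gt0 invf_gt1.
have ehp : 0 < e * h by rewrite mulr_gt0.
set n := Num.bound (e * h)^-1; exists n.
have nbig : (e * h)^-1 < n%:R by apply: archi_boundP; rewrite invr_ge0 ltW.
(* Bernoulli for r^-1 = 1 + h: r^-n >= 1 + n h > 1 / e *)
have := bernoulli n (ltW (lt_trans (ltrN10 R) hp)).
rewrite {2}/h [1 + (r^-1 - 1)]addrC subrK exprVn => rVn.
have rnp : 0 < r ^+ n by rewrite exprn_gt0.
rewrite -[r ^+ n]invrK -[e]invrK ltf_pV2 ?posrE ?invr_gt0 //.
apply: lt_le_trans rVn.
have eV : e^-1 = (e * h)^-1 * h by rewrite invfM mulfVK // gt_eqF.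
have : e^-1 < n%:R * h by rewrite eV ltr_pM2r.
lra.
Qed.

Lemma dyadic_gt0 k : 0 < 2 ^- k :> R.
Proof. by rewrite invr_gt0 exprn_gt0. Qed.

Lemma dyadic_le1 k : 2 ^- k <= 1 :> R.
Proof. by rewrite invf_le1 ?exprn_gt0 // exprn_ege1 // ler1n. Qed.

Lemma dyadicS k : 2 ^- k.+1 = 2 ^- k / 2 :> R.
Proof. by rewrite exprSr invfM. Qed.

Lemma natr_dyadic k : (2 ^ k)%:R * 2 ^- k = 1 :> R.
Proof. by rewrite natrX mulfV // expf_neq0 // pnatr_eq0. Qed.

Lemma eventually_dyadic_lt e : 0 < e -> eventually (fun k => 2 ^- k < e :> R).
Proof.
move=> e0; exists (Num.bound e^-1) => k /upper_nthrootP eV.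
by rewrite -[e]invrK ltf_pV2 ?posrE ?invr_gt0 ?exprn_gt0.
Qed.

Lemma dyadic_pow_le (x : R) j : 0 <= x -> x <= 1 / 2 ->
  (1 + x * 2 ^- j) ^+ (2 ^ j) <= 1 + 2 * x.
Proof.
move=> x0 x1; set y := x * 2 ^- j; set m := (2 ^ j)%N.
have y0 : 0 <= y by rewrite mulr_ge0 // ltW // dyadic_gt0.
have y1 : y <= x by rewrite /y ler_piMr // dyadic_le1.
have my : m%:R * y = x by rewrite /y mulrCA natr_dyadic mulr1.
(* (1 + y)^m (1 - y)^m <= 1 and (1 - y)^m >= 1 - x by Bernoulli *)
have pq : (1 + y) ^+ m * (1 - y) ^+ m <= 1 by rewrite -exprMn exprn_ile1 //; nra.
have q1 : 1 - x <= (1 - y) ^+ m.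
  by have := @bernoulli (- y) m ltac:(lra); rewrite mulrN my -!(addrC (- _)).
have p0 : 0 <= (1 + y) ^+ m by rewrite exprn_ge0 //; lra.
move: pq q1 p0; set p := (1 + y) ^+ m; set q := (1 - y) ^+ m => pq q1 p0.
have : p * (1 - x) <= p * q by rewrite ler_wpM2l.
nra.
Qed.

Lemma dyadic_cauchy_real (u : nat -> R) (C : R) :
  (forall k, `|u k.+1 - u k| <= C * 2 ^- k) ->
  exists l, forall k, `|l - u k| <= 2 * C * 2 ^- k.
Proof.
move=> uC; pose lo k := u k - 2 * C * 2 ^- k; pose hi k := u k + 2 * C * 2 ^- k.
have C0 : 0 <= C by have := uC 0%N; rewrite expr0 invr1 mulr1; apply: le_trans.
have lo_up : {homo lo : m n / (m <= n)%N >-> m <= n}.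
  apply: homo_leq => [//|y x z|k]; first exact: le_trans.
  by rewrite /lo dyadicS; have := uC k; rewrite ler_norml; lra.
have hi_down : {homo hi : m n / (m <= n)%N >-> n <= m}.
  apply: (@homo_leq _ hi (fun a b => b <= a)) => [//|y x z xy yz|k].
    exact: le_trans yz xy.
  by rewrite /hi dyadicS; have := uC k; rewrite ler_norml; lra.
have lo_hi k k' : lo k' <= hi k.
  have [kk'|k'k] := leqP k k'.
    by apply: le_trans (hi_down _ _ kk'); rewrite /lo /hi; have := dyadic_gt0 k'; nra.
  by apply: le_trans (lo_up _ _ (ltnW k'k)) _; rewrite /lo /hi; have := dyadic_gt0 k; nra.
pose E : set R := fun x => exists k, lo k = x.
have supE : has_sup E by split; [exists (lo 0%N), 0%N | exists (hi 0%N) => x [k <-]].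
exists (sup E) => k.
have lo_sup : lo k <= sup E by apply: sup_upper_bound supE _ _; exists k.
have sup_hi : sup E <= hi k by apply: ge_sup; [exists (lo 0%N), 0%N | move=> x [k' <-]].
by rewrite ler_norml; move: lo_sup sup_hi; rewrite /lo /hi; lra.
Qed.

End RealEstimates.

Lemma dyadic_cauchy (R : realType) (u : nat -> R[i]) (C : R) :
  (forall k, normc (u k.+1 - u k) <= C * 2 ^- k) ->
  exists l, forall k, normc (l - u k) <= 4 * C * 2 ^- k.
Proof.
move=> uC.
have ReB (a b : R[i]) : complex.Re (a - b) = complex.Re a - complex.Re b by case: a; case: b.
have ImB (a b : R[i]) : complex.Im (a - b) = complex.Im a - complex.Im b by case: a; case: b.
have [a aC] : exists a, forall k, `|a - complex.Re (u k)| <= 2 * C * 2 ^- k.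
  by apply: dyadic_cauchy_real => k; rewrite -ReB; apply: le_trans (normc_Re _) (uC k).
have [b bC] : exists b, forall k, `|b - complex.Im (u k)| <= 2 * C * 2 ^- k.
  by apply: dyadic_cauchy_real => k; rewrite -ImB; apply: le_trans (normc_Im _) (uC k).
exists (a +i* b) => k; apply: le_trans (normc_le_ReIm _) _.
by have := aC k; have := bC k; rewrite ReB ImB /=; lra.
Qed.

Lemma normc_exprD1_sub1 (R : realType) (w : R[i]) m :
  normc ((1 + w) ^+ m - 1) <= (1 + normc w) ^+ m - 1.
Proof.
elim: m => [|m IH]; first by rewrite !expr0 !subrr normc0.
have -> : (1 + w) ^+ m.+1 - 1 = (1 + w) * ((1 + w) ^+ m - 1) + w by rewrite exprS; ring.
apply: le_trans (le_normcD _ _) _; rewrite normcM exprS.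
have w1 : normc (1 + w) <= 1 + normc w by apply: le_trans (le_normcD _ _) _; rewrite normc1.
have : 1 <= (1 + normc w) ^+ m by rewrite exprn_ege1 // lerDl normc_ge0.
have := normc_ge0 ((1 + w) ^+ m - 1); have := normc_ge0 (1 + w).
move: IH w1; set q := (1 + normc w) ^+ m; set a := normc (_ - 1); nra.
Qed.

Lemma normc_dyadic (R : realType) k : normc (2 ^- k : R)%:C = 2 ^- k.
Proof. by rewrite normcR gtr0_norm // dyadic_gt0. Qed.

Lemma tends_to_dyadic (R : realType) (u : nat -> R[i]) l C :
  (forall k, normc (l - u k) <= C * 2 ^- k) -> tends_to eventually u l.
Proof.
move=> uC e e0.
have C0 : 0 <= C.
  by apply: le_trans (normc_ge0 (l - u 0%N)) _; have := uC 0%N; rewrite expr0 invr1 mulr1.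
have [K K_e] := eventually_dyadic_lt (divr_gt0 e0 (ltr_wpDl C0 ltr01)).
exists K => k /K_e ke; rewrite normcB; apply: le_lt_trans (uC k) _.
have eE : e / (C + 1) * (C + 1) = e by rewrite divfK // gt_eqF // ltr_wpDl.
have := dyadic_gt0 R k; move: ke eE; set x := 2 ^- k; set y := e / (C + 1); nra.
Qed.

Lemma is_deriv0_dyadic (R : realType) (f : R[i] -> R[i]) l e :
  is_deriv0 f l -> 0 < e ->
  eventually (fun k => normc (f (2 ^- k)%:C - f 0 - (2 ^- k)%:C * l) <= e * 2 ^- k).
Proof.
move=> fl e0; have [del del0 del_f] := fl e e0.
have [K K_del] := eventually_dyadic_lt del0; exists K => k /K_del kdel.
set w : R[i] := (2 ^- k)%:C.
have w0 : w != 0 by rewrite -normc_eq0 normc_dyadic gt_eqF ?dyadic_gt0.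
have := del_f w w0; rewrite normc_dyadic => /(_ kdel) /ltW.
rewrite -(ler_pM2r (dyadic_gt0 R k)) -[X in _ * X](normc_dyadic R k) -normcM.
by rewrite mulrBl mulfVK // [l * _]mulrC.
Qed.

(** * The ray stabilizer of a semistable vector *)

Section LieAction.
Variables (R : realType) (N : nat) (d : 'I_N -> nat).

(* The infinitesimal action of X, i.e. sum_i 1 (x) ... (x) X_i (x) ... (x) 1. *)
Definition lie_act (X : mxtuple R d) (v : tensor R d) : tensor R d :=
  fun j => \sum_(k : midx d) (\sum_(i < N) X i (j i) (k i) *
      \prod_(i' < N | i' != i) mxtuple1 R d i' (j i') (k i')) * v k.

Lemma lie_actZ X z v j : lie_act (fun i => z *: X i) v j = z * lie_act X v j.
Proof.
rewrite /lie_act big_distrr; apply: eq_bigr => k _.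
rewrite /= mulrA big_distrr /=; congr (_ * _); apply: eq_bigr => i _.
by rewrite mxE mulrA.
Qed.

Lemma is_deriv0_act (g : R[i] -> mxtuple R d) (X : mxtuple R d) (v : tensor R d) :
  g 0 = mxtuple1 R d -> (forall i a b, is_deriv0 (fun z => g z i a b) (X i a b)) ->
  forall j, is_deriv0 (fun z => act (g z) v j) (lie_act X v j).
Proof.
move=> g0 gX j; apply: is_deriv0_sum => k.
have := is_deriv0M (is_deriv0_prod (index_enum_uniq _) (fun i => gX i (j i) (k i)))
  (is_deriv0_cst (v k)).
by rewrite mulr0 addr0 g0.
Qed.

End LieAction.

Lemma is_deriv0_det (R : realType) (n : nat) (M : R[i] -> 'M[R[i]]_n) (X : 'M[R[i]]_n) :
  M 0 = 1%:M -> (forall a b, is_deriv0 (fun z => M z a b) (X a b)) ->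
  is_deriv0 (fun z => \det (M z)) (\tr X).
Proof.
move=> M0 MX.
have := is_deriv0_sum (index_enum _) (fun s : 'S_n =>
  is_deriv0M (is_deriv0_cst ((-1) ^+ s))
             (is_deriv0_prod (index_enum_uniq _) (fun i => MX i (s i)))).
rewrite /determinant; congr is_deriv0.
(* only the identity permutation contributes: any other one moves some i off the diagonal *)
rewrite (bigD1 1%g) //= odd_perm1 mul0r add0r expr0 mul1r [X in _ + X]big1 ?addr0.
  rewrite /mxtrace; apply: eq_bigr => i _; rewrite perm1 M0 big1 ?mulr1 // => i' _.
  by rewrite perm1 mxE eqxx.
move=> s s1; rewrite mul0r add0r big1 ?mulr0 // => i _; rewrite M0.
have [si|si] := eqVneq (s i) i.
  have [i' si'] : exists i', s i' != i'.
    apply/existsP; apply: contraR s1 => /existsPn fix_s; apply/eqP/permP => x.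
    by have := fix_s x; rewrite negbK perm1 => /eqP.
  have i'i : i' != i by apply: contraNneq si' => ->; rewrite si.
  by rewrite (bigD1 i') //= mxE eq_sym (negbTE si') mul0r mulr0.
have ssi : s (s i) != s i by rewrite (inj_eq perm_inj).
by rewrite (bigD1 (s i)) //= mxE eq_sym (negbTE ssi) mul0r mulr0.
Qed.

Lemma tends_to_det (R : realType) (T : Type) (F : (T -> Prop) -> Prop) n
    (M : T -> 'M[R[i]]_n) (E : 'M[R[i]]_n) :
  is_filter F -> (forall u v, tends_to F (fun t => M t u v) (E u v)) ->
  tends_to F (fun t => \det (M t)) (\det E).
Proof.
move=> hF ME; apply: (tends_to_sum hF) => s.
apply: (tends_toM hF); first exact: (tends_to_cst hF).
by apply: (tends_to_prod hF) => i; apply: ME.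
Qed.

Lemma unimodular_deriv0_eq0 (R : realType) (c : R[i] -> R[i]) (l : R[i]) :
  c 0 = 1 -> (forall z, normc (c z) = 1) -> is_deriv0 c l -> l = 0.
Proof.
move=> c0 c1 cl; apply/eqP/negP => /negP l0.
have nl : 0 < normc l by rewrite normc_gt0.
have [del del0 del_cl] := cl _ (divr_gt0 nl (ltr0n R 2)).
(* at z = t / l with t > 0 real, c z = 1 + t (1 + u) with |u| < 1/2, so Re (c z) > 1 *)
set t := del * normc l / 2; have t0 : 0 < t by rewrite divr_gt0 ?mulr_gt0.
set z := t%:C / l.
have zn : normc z = del / 2.
  by rewrite normcM normcV normcR gtr0_norm // /t mulrAC mulfK // gt_eqF.
have z0 : z != 0 by rewrite -normc_eq0 zn gt_eqF // divr_gt0.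
have zdel : normc z < del by rewrite zn; lra.
have := del_cl z z0 zdel; set u := ((c z - c 0) / z - l) / l => cl_z.
have uE : normc u < 1 / 2 by rewrite /u normcM normcV ltr_pdivrMr //; lra.
have cz : c z = 1 + t%:C * (1 + u).
  by rewrite /u c0 /z; field; rewrite l0 (inj_eq (@complexI R)) gt_eqF.
have : complex.Re (c z) <= 1 by rewrite -(c1 z); apply: le_trans (normc_Re _); apply: ler_norm.
have : - normc u <= complex.Re u.
  by rewrite lerNl; apply: le_trans (normc_Re u); rewrite -normrN ler_norm.
by rewrite cz; case: u uE {cz cl_z} => a b /=; rewrite mul0r subr0; nra.
Qed.

Lemma tangent_is_deriv0 (R : realType) (N : nat) (d : 'I_N -> nat)
    (S : mxtuple R d -> Prop) (X : mxtuple R d) :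
  tangent_at_1 S X -> exists g : R[i] -> mxtuple R d,
    [/\ forall z, S (g z), g 0 = mxtuple1 R d &
        forall i a b, is_deriv0 (fun z => g z i a b) (X i a b)].
Proof.
move=> [g [Sg [g0 gX]]]; exists g; split => // i a b e e0.
have [del [del0 del_g]] := gX e e0; exists del => // z z0 zdel.
by rewrite g0 -normc_ltC; apply: del_g; rewrite ?normc_ltC.
Qed.

Section Semistable.
Variables (R : realType) (N : nat) (d : 'I_N -> nat) (psi : tensor R d).
Hypothesis psi_ss : semistable psi.

Lemma semistable_neq0 : exists j, psi j != 0.
Proof.
have [e [e0 /(_ _ (inG1 R d))[j]]] := psi_ss; rewrite act1 normc_leC => ej.
by exists j; rewrite -normc_eq0 gt_eqF // (lt_le_trans e0).
Qed.

Lemma semistable_scalar_ge1 (g : mxtuple R d) c :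
  inG g -> act g psi = (fun j => c * psi j) -> 1 <= normc c.
Proof.
move=> Gg gc; rewrite leNgt; apply/negP => c1.
have [e [e0 orbit_e]] := psi_ss.
have gnc n : act (fun i => g i ^+ n) psi = (fun j => c ^+ n * psi j).
  rewrite act_exp; elim: n => [|n IH]; first by apply: funext => j; rewrite mul1r.
  by rewrite iterS IH actZ gc; apply: funext => j; rewrite exprS mulrCA mulrA.
(* |c|^n psi eventually lies in the e-ball around 0 *)
set S := \sum_(j : midx d) normc (psi j).
have S0 : 0 <= S by apply: sumr_ge0 => j _; apply: normc_ge0.
have eS : 0 < e / (S + 1) by rewrite divr_gt0 //; lra.
have [n cn] := exists_exprn_lt (normc_ge0 c) c1 eS.
have [j] := orbit_e _ (inG_exp n Gg); rewrite gnc normc_leC normcM normcX.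
have psiS : normc (psi j) <= S.
  by rewrite /S (bigD1 j) //= lerDl sumr_ge0 // => k _; apply: normc_ge0.
have eSE : e / (S + 1) * (S + 1) = e by rewrite divfK // gt_eqF //; lra.
have := normc_ge0 (psi j); have := exprn_ge0 n (normc_ge0 c).
move: cn psiS eSE; set q := normc c ^+ n; set a := e / (S + 1); nra.
Qed.

Lemma semistable_scalar_unimodular (g : mxtuple R d) c :
  inG g -> act g psi = (fun j => c * psi j) -> normc c = 1.
Proof.
move=> Gg gc.
have psiE j : psi j = c * act (mxtuple_inv g) psi j.
  have := act_mul (mxtuple_inv g) g psi; rewrite mxtuple_mulVg // act1 gc actZ.
  by move=> /(congr1 (fun f => f j)).
have [j psij] := semistable_neq0.
have c0 : c != 0 by apply: contraNneq psij => c0; rewrite psiE c0 mul0r.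
have gVc : act (mxtuple_inv g) psi = (fun j => c^-1 * psi j).
  by apply: funext => k; rewrite psiE mulrA mulVf // mul1r.
apply/le_anti; rewrite (semistable_scalar_ge1 Gg gc) andbT.
have := semistable_scalar_ge1 (inG_inv Gg) gVc.
by rewrite normcV invf_ge1 // normc_gt0.
Qed.

Lemma tangent_stab_ray_traceless X :
  tangent_at_1 (stab_ray psi) X -> forall i, \tr (X i) = 0.
Proof.
move=> /tangent_is_deriv0[g [Sg g0 gX]] i.
apply: (@is_deriv0_unique R (fun z => \det (g z i))).
  by apply: is_deriv0_det => //; rewrite g0.
have -> : (fun z => \det (g z i)) = (fun _ => 1).
  by apply: funext => z; case: (Sg z) => Gg _; apply: Gg.
exact: is_deriv0_cst.
Qed.

Lemma tangent_stab_ray_lie_act X :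
  tangent_at_1 (stab_ray psi) X -> forall j, lie_act X psi j = 0.
Proof.
move=> /tangent_is_deriv0[g [Sg g0 gX]].
have [j0 psij0] := semistable_neq0.
pose c z := act (g z) psi j0 / psi j0.
have gc z : act (g z) psi = (fun j => c z * psi j).
  by case: (Sg z) => _ [cz gcz]; apply: funext => j; rewrite gcz /c gcz mulfK.
have c1 z : normc (c z) = 1.
  by case: (Sg z) => Gg _; apply: (semistable_scalar_unimodular Gg (gc z)).
have c0 : c 0 = 1 by rewrite /c g0 act1 mulfV.
have act_X := is_deriv0_act psi g0 gX.
have cX : is_deriv0 c (lie_act X psi j0 / psi j0).
  by have := is_deriv0M (act_X j0) (is_deriv0_cst (psi j0)^-1); rewrite mulr0 addr0.
have cX0 := unimodular_deriv0_eq0 c0 c1 cX.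
move=> j; apply: (@is_deriv0_unique R (fun z => act (g z) psi j)); first exact: act_X.
have -> : (fun z => act (g z) psi j) = (fun z => c z * psi j).
  by apply: funext => z; rewrite gc.
by have := is_deriv0M cX (is_deriv0_cst (psi j)); rewrite cX0 mul0r mulr0 addr0.
Qed.

End Semistable.

(** * Exponentials as limits of (1 + 2^-k A)^(2^k) *)

Section RowSumBound.
Variables (R : realType) (n : nat).
Implicit Types A B : 'M[R[i]]_n.

(* A bound on the operator norm of A for the sup norm on R[i]^n. *)
Definition rowsum_le A (r : R) := forall a, \sum_b normc (A a b) <= r.

Lemma rowsum_le_entry A r a b : rowsum_le A r -> normc (A a b) <= r.
Proof.
move=> Ar; apply: le_trans (Ar a); rewrite (bigD1 b) //= lerDl.
by apply: sumr_ge0 => c _; apply: normc_ge0.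
Qed.

Lemma rowsum_le_trans A r s : r <= s -> rowsum_le A r -> rowsum_le A s.
Proof. by move=> rs Ar a; apply: le_trans rs. Qed.

Lemma rowsum_le1 : rowsum_le 1%:M 1.
Proof.
move=> a; rewrite (bigD1 a) //= big1 ?addr0 ?mxE ?eqxx ?normc1 //.
by move=> b ba; rewrite mxE eq_sym (negbTE ba) normc0.
Qed.

Lemma rowsum_leD A B r s : rowsum_le A r -> rowsum_le B s -> rowsum_le (A + B) (r + s).
Proof.
move=> Ar Bs a; apply: le_trans (lerD (Ar a) (Bs a)).
by rewrite -big_split /=; apply: ler_sum => b _; rewrite mxE le_normcD.
Qed.

Lemma rowsum_leZ A r c : rowsum_le A r -> rowsum_le (c *: A) (normc c * r).
Proof.
move=> Ar a; under eq_bigr do rewrite mxE normcM.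
by rewrite -big_distrr /=; apply: ler_wpM2l (Ar a); apply: normc_ge0.
Qed.

Lemma rowsum_le1Z A r c : rowsum_le A r -> rowsum_le (1%:M + c *: A) (1 + normc c * r).
Proof. by move=> Ar; apply: rowsum_leD rowsum_le1 (rowsum_leZ c Ar). Qed.

Lemma rowsum_leM A B r s : 0 <= s -> rowsum_le A r -> rowsum_le B s ->
  rowsum_le (A *m B) (r * s).
Proof.
move=> s0 Ar Bs a.
apply: (@le_trans _ _ (\sum_b \sum_c normc (A a c) * normc (B c b))).
  apply: ler_sum => b _; rewrite mxE; apply: le_trans (normc_sum _ _) _.
  by apply: ler_sum => c _; rewrite normcM.
rewrite exchange_big /=; apply: (@le_trans _ _ (\sum_c normc (A a c) * s)).
  apply: ler_sum => c _; rewrite -big_distrr /=; apply: ler_wpM2l (Bs c).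
  exact: normc_ge0.
by rewrite -big_distrl /= ler_wpM2r.
Qed.

Lemma rowsum_leX A r k : 0 <= r -> rowsum_le A r -> rowsum_le (A ^+ k) (r ^+ k).
Proof.
move=> r0 Ar; elim: k => [|k IH]; first by rewrite !expr0; apply: rowsum_le1.
by rewrite !exprS; apply: rowsum_leM => //; rewrite exprn_ge0.
Qed.

Lemma rowsum_le_exprB A B M e k : 1 <= M -> 0 <= e ->
  rowsum_le A M -> rowsum_le B M -> rowsum_le (A - B) e ->
  rowsum_le (A ^+ k - B ^+ k) (k%:R * e * M ^+ k).
Proof.
move=> M1 e0 AM BM ABe; elim: k => [|k IH].
  by move=> a; rewrite !mul0r !expr0 subrr; under eq_bigr do rewrite mxE normc0; rewrite big1.
have -> : A ^+ k.+1 - B ^+ k.+1 = A *m (A ^+ k - B ^+ k) + (A - B) *m B ^+ k.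
  by rewrite !exprS mulmxBr mulmxBl addrA subrK.
have M0 : 0 <= M by lra.
have Mk : 1 <= M ^+ k by rewrite exprn_ege1.
apply: rowsum_le_trans (rowsum_leD (rowsum_leM _ AM IH)
  (rowsum_leM _ ABe (rowsum_leX k M0 BM))); last 2 first.
- by rewrite !mulr_ge0 ?exprn_ge0.
- by rewrite exprn_ge0.
rewrite exprS -natr1; set q := M ^+ k.
have : 0 <= k%:R :> R by rewrite ler0n.
have : 0 <= e * q * (M - 1) by rewrite !mulr_ge0 // ?subr_ge0 // (le_trans ler01).
nra.
Qed.

Lemma det_exprn A k : \det (A ^+ k) = \det A ^+ k.
Proof.
by elim: k => [|k IH]; rewrite ?det1 ?expr0 // !exprS -[_ * _]/(_ *m _) det_mulmx IH.
Qed.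

End RowSumBound.

Lemma sqr_1Z_sub (K : comPzRingType) n (A : 'M[K]_n) (c : K) :
  (1%:M + c *: A) ^+ 2 - (1%:M + (c + c) *: A) = c ^+ 2 *: (A *m A).
Proof.
rewrite expr2 mulrDl !mulrDr mulr1 mul1r -!mulmxE mulmx1 -scalemxAl -scalemxAr.
by rewrite scalerA -expr2 scalerDl !addrA [LHS]addrC addKr.
Qed.

Section ExpApprox.
Variables (R : realType) (n : nat).
Implicit Types A : 'M[R[i]]_n.

(* Converges to exp A as k grows. *)
Definition exp_approx A k : 'M[R[i]]_n := (1%:M + (2 ^- k)%:C *: A) ^+ (2 ^ k).

Lemma exp_approx0 A : exp_approx A 0 = 1%:M + A.
Proof. by rewrite /exp_approx expr0 invr1 rmorph1 scale1r expn0 expr1. Qed.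

Lemma exp_approxS A k :
  exp_approx A k.+1 = ((1%:M + (2 ^- k.+1)%:C *: A) ^+ 2) ^+ (2 ^ k).
Proof. by rewrite /exp_approx expnSr mulnC exprM. Qed.

Lemma rowsum_le_exp_approxS A a k : rowsum_le A a -> 0 <= a -> a <= 1 / 2 ->
  rowsum_le (exp_approx A k.+1 - exp_approx A k) (a ^+ 2 / 2 * 2 ^- k).
Proof.
move=> Aa a0 a1; rewrite exp_approxS /exp_approx.
set c : R := 2 ^- k.+1; have c0 : 0 < c := dyadic_gt0 R k.+1.
have cc : 2 ^- k = c + c by rewrite /c dyadicS -splitr.
set M := (1 + c * a) ^+ 2; set m := (2 ^ k)%N.
have M1 : 1 <= M by rewrite exprn_ege1 // lerDl mulr_ge0 // ltW.
have nc : normc c%:C = c := normc_dyadic R k.+1.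
have Za : rowsum_le ((1%:M + c%:C *: A) ^+ 2) M.
  have ca0 : 0 <= 1 + c * a by have := ltW c0; nra.
  by have := rowsum_le1Z c%:C Aa; rewrite nc => Za; exact: (rowsum_leX 2 ca0 Za).
have Ya : rowsum_le (1%:M + (2 ^- k)%:C *: A) M.
  apply: rowsum_le_trans (rowsum_le1Z _ Aa); rewrite normc_dyadic cc /M.
  by have := sqr_ge0 (c * a); rewrite exprMn; nra.
have ZYa : rowsum_le ((1%:M + c%:C *: A) ^+ 2 - (1%:M + (2 ^- k)%:C *: A))
    (c ^+ 2 * a ^+ 2).
  rewrite cc rmorphD sqr_1Z_sub.
  by have := rowsum_leZ (c%:C ^+ 2) (rowsum_leM a0 Aa Aa); rewrite normcX normcR gtr0_norm -?expr2.
have := rowsum_le_exprB m M1 (mulr_ge0 (sqr_ge0 c) (sqr_ge0 a)) Za Ya ZYa.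
apply: rowsum_le_trans.
(* M^m = (1 + a 2^-(k+1))^(2^(k+1)) <= 1 + 2 a *)
have Mm : M ^+ m <= 2.
  rewrite /M -exprM mulnC -expnSr mulrC; apply: le_trans (dyadic_pow_le _ a0 a1) _; lra.
have mc : m%:R * c ^+ 2 = 2 ^- k / 4.
  have -> : m%:R * c ^+ 2 = (m%:R * 2 ^- k) * 2 ^- k / 4.
    by rewrite /c dyadicS; field; rewrite gt_eqF // exprn_gt0.
  by rewrite natr_dyadic mul1r.
have x0 : 0 <= 2 ^- k * a ^+ 2 by rewrite mulr_ge0 ?sqr_ge0 // ltW // dyadic_gt0.
have := ler_wpM2l x0 Mm; rewrite [m%:R * _]mulrA mc; nra.
Qed.

Lemma is_deriv0_1Z A u v : is_deriv0 (fun z => (1%:M + z *: A) u v) (A u v).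
Proof.
have := is_deriv0_affine (1%:M u v : R[i]) (A u v); congr is_deriv0.
by apply: funext => z; rewrite !mxE.
Qed.

Lemma exp_approx_limit A a : rowsum_le A a -> 0 <= a -> a <= 1 / 2 ->
  exists E : 'M[R[i]]_n,
    (forall u v, tends_to eventually (fun k => exp_approx A k u v) (E u v)) /\
    (forall u v, normc (E u v - (1%:M + A) u v) <= 2 * a ^+ 2).
Proof.
move=> Aa a0 a1.
have entry_lim (uv : 'I_n * 'I_n) : exists l : R[i], forall k,
    normc (l - exp_approx A k uv.1 uv.2) <= 4 * (a ^+ 2 / 2) * 2 ^- k.
  apply: dyadic_cauchy => k.
  by have := rowsum_le_entry uv.1 uv.2 (rowsum_le_exp_approxS k Aa a0 a1); rewrite !mxE.
have [E EA] := choice entry_lim.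
exists (\matrix_(u, v) E (u, v)); split => u v; rewrite mxE.
  exact: tends_to_dyadic (EA (u, v)).
by have := EA (u, v) 0%N; rewrite exp_approx0 expr0 invr1 mulr1; lra.
Qed.

Lemma det_exp_approx A : \tr A = 0 -> tends_to eventually (fun k => \det (exp_approx A k)) 1.
Proof.
move=> trA e e0.
have detA : is_deriv0 (fun w => \det (1%:M + w *: A)) 0.
  by rewrite -trA; apply: is_deriv0_det => [|u v]; [rewrite scale0r addr0 | apply: is_deriv0_1Z].
set eta := Num.min (1 / 2) (e / 4).
have eta0 : 0 < eta by rewrite lt_min; apply/andP; split; [lra | rewrite divr_gt0].
have eta1 : eta <= 1 / 2 by rewrite ge_min lexx.
have eta2 : eta <= e / 4 by rewrite ge_min lexx orbT.
have [K K_det] := is_deriv0_dyadic detA eta0; exists K => k /K_det.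
rewrite scale0r addr0 det1 mulr0 subr0 /exp_approx det_exprn.
set z := \det _ - 1 => zk; have -> : \det (1%:M + (2 ^- k)%:C *: A) = 1 + z.
  by rewrite /z [RHS]addrC subrK.
apply: le_lt_trans (normc_exprD1_sub1 _ _) _.
have : (1 + normc z) ^+ (2 ^ k) <= (1 + eta * 2 ^- k) ^+ (2 ^ k).
  by rewrite lerXn2r ?nnegrE ?lerD2l // addr_ge0 ?normc_ge0 ?mulr_ge0 ?ltW ?dyadic_gt0.
have := dyadic_pow_le k (ltW eta0) eta1; lra.
Qed.

End ExpApprox.

(** * The vector stabilizer *)

Section ActionEstimates.
Variables (R : realType) (N : nat) (d : 'I_N -> nat).
Implicit Types (g A : mxtuple R d) (v psi : tensor R d).

Lemma tends_to_act (T : Type) (F : (T -> Prop) -> Prop) (M : T -> mxtuple R d) g v :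
  is_filter F -> (forall i a b, tends_to F (fun t => M t i a b) (g i a b)) ->
  forall j, tends_to F (fun t => act (M t) v j) (act g v j).
Proof.
move=> hF Mg j; apply: (tends_to_sum hF) => k.
apply: (tends_toM hF); last exact: (tends_to_cst hF).
by apply: (tends_to_prod hF) => i; apply: Mg.
Qed.

Lemma normc_act_le g v (b : 'I_N -> R) r :
  (forall i, rowsum_le (g i) (b i)) -> 0 <= r -> (forall j, normc (v j) <= r) ->
  forall j, normc (act g v j) <= (\prod_(i < N) b i) * r.
Proof.
move=> gb r0 vr j; apply: le_trans (normc_sum _ _) _.
apply: (@le_trans _ _ (\sum_(k : midx d) (\prod_(i < N) normc (g i (j i) (k i))) * r)).
  apply: ler_sum => k _; rewrite normcM normc_prod; apply: ler_wpM2l (vr k).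
  by apply: prodr_ge0 => i _; apply: normc_ge0.
rewrite -big_distrl /= ler_wpM2r // -(prod_sum_midx (fun i b => normc (g i (j i) b))).
by apply: ler_prod => i _; rewrite sumr_ge0 //= => [|c _]; [apply: gb | apply: normc_ge0].
Qed.

Lemma normc_iter_act_sub_le g psi (beta r : R) :
  1 <= beta -> 0 <= r ->
  (forall v s, 0 <= s -> (forall j, normc (v j) <= s) ->
     forall j, normc (act g v j) <= beta * s) ->
  (forall j, normc (act g psi j - psi j) <= r) ->
  forall m j, normc (iter m (act g) psi j - psi j) <= m%:R * beta ^+ m * r.
Proof.
move=> b1 r0 g_beta gr; elim=> [|m IH] j; first by rewrite /= subrr normc0 !mul0r.
have -> : iter m.+1 (act g) psi j - psi j =
    act g (fun j => iter m (act g) psi j - psi j) j + (act g psi j - psi j).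
  by rewrite actB iterS; ring.
have s0 : 0 <= m%:R * beta ^+ m * r by rewrite !mulr_ge0 ?ler0n ?exprn_ge0 //; lra.
apply: le_trans (le_normcD _ _) _; apply: le_trans (lerD (g_beta _ _ s0 IH j) (gr j)) _.
have : 1 <= beta ^+ m by rewrite exprn_ege1.
have : 0 <= m%:R :> R by rewrite ler0n.
rewrite exprS -natr1; set q := beta ^+ m; set mm := m%:R => m0 q1.
have : 0 <= r * (beta * q - 1) by rewrite mulr_ge0 // subr_ge0; nra.
nra.
Qed.

Lemma normc_act_exp_approx_sub A psi a k r :
  (forall i, rowsum_le (A i) a) -> 0 <= a -> a <= 1 / 2 -> 0 <= r ->
  (forall j, normc (act (fun i => 1%:M + (2 ^- k)%:C *: A i) psi j - psi j) <= r * 2 ^- k) ->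
  forall j, normc (act (fun i => exp_approx (A i) k) psi j - psi j) <= 2 ^+ N * r.
Proof.
move=> Aa a0 a1 r0 step j; rewrite act_exp.
set beta := (1 + a * 2 ^- k) ^+ N.
have ak0 : 0 <= a * 2 ^- k by rewrite mulr_ge0 // ltW // dyadic_gt0.
have b1 : 1 <= beta by rewrite exprn_ege1 // lerDl.
have growth v s : 0 <= s -> (forall j, normc (v j) <= s) ->
    forall j, normc (act (fun i => 1%:M + (2 ^- k)%:C *: A i) v j) <= beta * s.
  move=> s0 vs j'.
  have gb i : rowsum_le (1%:M + (2 ^- k)%:C *: A i) (1 + a * 2 ^- k).
    by have := rowsum_le1Z (2 ^- k)%:C (Aa i); rewrite normc_dyadic mulrC.
  by have := normc_act_le gb s0 vs j'; rewrite prodr_const card_ord.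
have := normc_iter_act_sub_le b1 (mulr_ge0 r0 (ltW (dyadic_gt0 R k))) growth step (2 ^ k) j.
move/le_trans; apply.
(* beta^(2^k) = ((1 + a 2^-k)^(2^k))^N <= (1 + 2a)^N *)
have beta_m : beta ^+ (2 ^ k) <= 2 ^+ N.
  rewrite /beta -exprM mulnC exprM lerXn2r ?nnegrE ?exprn_ge0 ?addr_ge0 //.
  by apply: le_trans (dyadic_pow_le _ a0 a1) _; lra.
have -> : (2 ^ k)%:R * beta ^+ (2 ^ k) * (r * 2 ^- k) =
    beta ^+ (2 ^ k) * r * ((2 ^ k)%:R * 2 ^- k) by ring.
by rewrite natr_dyadic mulr1 ler_wpM2r.
Qed.

Lemma act_exp_approx A psi a :
  (forall i, rowsum_le (A i) a) -> 0 <= a -> a <= 1 / 2 -> (forall j, lie_act A psi j = 0) ->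
  forall j, tends_to eventually (fun k => act (fun i => exp_approx (A i) k) psi j) (psi j).
Proof.
move=> Aa a0 a1 A_psi j e e0.
pose line (w : R[i]) : mxtuple R d := fun i => 1%:M + w *: A i.
have line0 : line 0 = mxtuple1 R d.
  by apply: functional_extensionality_dep => i; rewrite /line scale0r addr0.
have line_psi := is_deriv0_act psi line0 (fun i => is_deriv0_1Z (A i)).
have e' : 0 < e / (2 ^+ N + 1) by rewrite divr_gt0 // ltr_wpDl ?exprn_ge0.
have [K K_line] := filter_forall eventually_filter (fun j => is_deriv0_dyadic (line_psi j) e').
exists K => k /K_line line_k.
apply: le_lt_trans (normc_act_exp_approx_sub Aa a0 a1 (ltW e') _ j) _.
  by move=> j'; have := line_k j'; rewrite line0 act1 A_psi mulr0 subr0.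
rewrite mulrA ltr_pdivrMr ?ltr_wpDl ?exprn_ge0 //; nra.
Qed.

End ActionEstimates.

Section TangentVectors.
Variables (R : realType) (N : nat) (d : 'I_N -> nat).
Implicit Types (S T : mxtuple R d -> Prop) (X : mxtuple R d).

Lemma tangent_at_1_sub S T X : (forall g, S g -> T g) -> tangent_at_1 S X -> tangent_at_1 T X.
Proof. by move=> ST [g [Sg gX]]; exists g; split => // z; apply/ST/Sg. Qed.

Lemma tangent_at_1_quadratic S X (rho C : R) : 0 < rho -> 0 <= C -> S (mxtuple1 R d) ->
  (forall z, z != 0 -> normc z < rho -> exists2 g, S g &
     forall i a b, normc (g i a b - (1%:M + z *: X i) a b) <= C * normc z ^+ 2) ->
  tangent_at_1 S X.
Proof.
move=> rho0 C0 S1 approx.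
have approx' z : exists g, z != 0 -> normc z < rho -> S g /\
    forall i a b, normc (g i a b - (1%:M + z *: X i) a b) <= C * normc z ^+ 2.
  have [z0|z0] := eqVneq z 0; first by exists (mxtuple1 R d).
  have [zr|_] := ltP (normc z) rho; last by exists (mxtuple1 R d).
  by have [g Sg gz] := approx z z0 zr; exists g.
have [f fP] := choice approx'.
exists (fun z => if (z != 0) && (normc z < rho) then f z else mxtuple1 R d); split.
  by move=> z; case: ifP => [/andP[z0 zr]|_]; [case: (fP z z0 zr) | ].
split=> [|e e0]; first by rewrite eqxx.
have Ce : 0 < e / (C + 1) by rewrite divr_gt0 // ltr_wpDl.
exists (Num.min rho (e / (C + 1))); split; first by rewrite lt_min rho0.
move=> z z0; rewrite normc_ltC lt_min => /andP[zr ze] i a b.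
rewrite z0 zr /= normc_ltC.
have [_ fz] := fP z z0 zr.
have -> : (f z i a b - mxtuple1 R d i a b) / z - X i a b =
    (f z i a b - (1%:M + z *: X i) a b) / z by rewrite !mxE; field.
have nz : 0 < normc z by rewrite normc_gt0.
rewrite normcM normcV ltr_pdivrMr //; apply: le_lt_trans (fz i a b) _.
have : normc z * (C + 1) < e by rewrite -ltr_pdivlMr // ltr_wpDl.
rewrite expr2; nra.
Qed.

Lemma exists_rowsum_le X : exists2 K : R, 0 < K & forall i, rowsum_le (X i) K.
Proof.
have le_sum (I : finType) (F : I -> R) x : (forall y, 0 <= F y) -> F x <= \sum_y F y.
  by move=> F0; rewrite (bigD1 x) //= lerDl sumr_ge0.
have rows_ge0 i a : 0 <= \sum_(b < d i) normc (X i a b).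
  by apply: sumr_ge0 => b _; apply: normc_ge0.
have all_ge0 : 0 <= \sum_(i < N) \sum_(a < d i) \sum_(b < d i) normc (X i a b).
  by do 2![apply: sumr_ge0 => ? _].
exists (1 + \sum_(i < N) \sum_(a < d i) \sum_(b < d i) normc (X i a b)).
  by rewrite ltr_pwDl.
move=> i a; apply: le_trans (le_sum _ _ a (rows_ge0 i)) _.
apply: le_trans (ler_wpDl ler01 (lexx _)) _; rewrite lerD2l.
by apply: (le_sum _ (fun i => \sum_(a < d i) _) i) => i'; apply: sumr_ge0.
Qed.

End TangentVectors.

Section VectorStabilizer.
Variables (R : realType) (N : nat) (d : 'I_N -> nat) (psi : tensor R d).

Lemma exp_in_stab_vec (X : mxtuple R d) (K : R) (z : R[i]) :
  (forall i, \tr (X i) = 0) -> (forall j, lie_act X psi j = 0) ->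
  (forall i, rowsum_le (X i) K) -> 0 <= K -> normc z * K <= 1 / 2 ->
  exists2 g, stab_vec psi g &
    forall i a b, normc (g i a b - (1%:M + z *: X i) a b) <= 2 * K ^+ 2 * normc z ^+ 2.
Proof.
move=> trX X_psi XK K0 zK.
have Aa i : rowsum_le (z *: X i) (normc z * K) by apply: rowsum_leZ.
have a0 : 0 <= normc z * K by rewrite mulr_ge0 ?normc_ge0.
pose E i := sval (cid (exp_approx_limit (Aa i) a0 zK)).
have [E_lim E_near] : (forall i a b, tends_to eventually
    (fun k => exp_approx (z *: X i) k a b) (E i a b)) /\
  (forall i a b, normc (E i a b - (1%:M + z *: X i) a b) <= 2 * (normc z * K) ^+ 2).
  by split=> i; case: (svalP (cid (exp_approx_limit (Aa i) a0 zK))).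
exists E; last by move=> i a b; apply: le_trans (E_near i a b) _; rewrite exprMn; nra.
split.
  move=> i; apply: (tends_to_unique eventually_filter eventually_proper).
    exact: (tends_to_det eventually_filter (E_lim i)).
  by apply: det_exp_approx; rewrite mxtraceZ trX mulr0.
apply: funext => j; apply: (tends_to_unique eventually_filter eventually_proper).
  exact: (tends_to_act psi eventually_filter E_lim).
by apply: (act_exp_approx Aa a0 zK) => j'; rewrite lie_actZ X_psi mulr0.
Qed.

Lemma tangent_stab_vec (X : mxtuple R d) :
  (forall i, \tr (X i) = 0) -> (forall j, lie_act X psi j = 0) ->
  tangent_at_1 (stab_vec psi) X.
Proof.
move=> trX X_psi; have [K K0 XK] := exists_rowsum_le X.
apply: (@tangent_at_1_quadratic _ _ _ _ _ (1 / (2 * K)) (2 * K ^+ 2)).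
- by rewrite divr_gt0 // mulr_gt0.
- by rewrite mulr_ge0 // sqr_ge0.
- by split; [exact: inG1 | exact: act1].
move=> z _ zK; apply: exp_in_stab_vec => //; first exact: ltW.
have : normc z * (2 * K) < 1 by rewrite -ltr_pdivlMr // mulr_gt0.
nra.
Qed.

End VectorStabilizer.

Theorem mainTheorem3 (R : realType) (N : nat) (d : 'I_N -> nat)
    (hd : forall i : 'I_N, (2 <= d i)%N) (psi : tensor R d) :
  semistable psi -> orbit_dim_vec psi = orbit_dim_ray psi.
Proof.
move=> psi_ss.
have same_tangents : tangent_at_1 (stab_ray psi) = tangent_at_1 (stab_vec psi).
  apply: funext => X; apply: propext; split => [X_ray|].
    apply: tangent_stab_vec; first exact: tangent_stab_ray_traceless X_ray.
    by move=> j; apply: (tangent_stab_ray_lie_act psi_ss X_ray j).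
  apply: tangent_at_1_sub => g [Gg g_psi]; split => //.
  by exists 1 => j; rewrite g_psi mul1r.
by rewrite /orbit_dim_vec /orbit_dim_ray /subgroup_dim same_tangents.
Qed.
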